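(* Let $\widetilde{\Sigma}_1,\ldots,\widetilde{\Sigma}_n$ be pairwise disjoint visibly pushdown alphabets with semantics $\mathcal{F}_k$, and let $\mathcal{M}$ and $\mathcal{S}$ be the $n$-stack and single-stack semantics defined in the context. For every well-nested word $\rho$ over $\widetilde{\Sigma}=\widetilde{\Sigma}_1\uplus\cdots\uplus\widetilde{\Sigma}_n$ without pending returns, every tuple of stacks $\vec{S}\in\prod_{j=1}^n\mathrm{stack}(V_j)$ and every stack $S\in\mathrm{stack}(V)$: if $\mathrm{top}(\vec{S})=\mathrm{top}(S)$, then $\{\mathrm{top}(\vec{T}):(\vec{S},\vec{T})\in\mathcal{M}(\rho)\}=\{\mathrm{top}(T):(S,T)\in\mathcal{S}(\rho)\}$.
   Context: A visibly pushdown (VP) alphabet is a finite alphabet partitioned into calls, returns and internals; $\Sigma^{\mathsf{call}}_k,\Sigma^{\mathsf{ret}}_k,\Sigma^{\mathsf{int}}_k$ are those of $\widetilde{\Sigma}_k$. Calls and returns are matched like parentheses (internals ignored); unmatched returns are pending returns. A word over $\widetilde{\Sigma}$ is well-nested if every matched call–return pair consists of letters from the same $\widetilde{\Sigma}_k$. Program $k$ has its own variables (disjoint across programs), $V_k$ its set of valuations, $V$ the set of valuations of all variables, identified with tuples $\nu=(\nu|_1,\ldots,\nu|_n)$, $\nu|_j\in V_j$. $\mathrm{stack}(X)$ is the set of nonempty finite stacks of frames in $X$; $S.\nu$ denotes a stack with top frame $\nu$ and rest $S$; $\mathrm{top}(S.\nu)=\nu$ and $\mathrm{top}(S_1,\ldots,S_n)=(\mathrm{top}(S_1),\ldots,\mathrm{top}(S_n))\in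 V$. Semantics $\mathcal{F}_k$: for $c\in\Sigma^{\mathsf{call}}_k$, $\mathcal{F}_k(c):V_k\to2^{V_k}$; for $r\in\Sigma^{\mathsf{ret}}_k$, $\mathcal{F}_k(r):V_k\times V_k\to2^{V_k}$; for $a\in\Sigma^{\mathsf{int}}_k$, $\mathcal{F}_k(a):V_k\to2^{V_k}$. $\mathcal{M}$: for $x\in\widetilde{\Sigma}_k$, $\mathcal{M}(x)$ relates tuples of stacks leaving components $j\ne k$ unchanged and changing the $k$-th: call $S.\nu\mapsto S.\nu.\nu'$ with $\nu'\in\mathcal{F}_k(x)(\nu)$; return $S.\nu_<.\nu\mapsto S.\nu'$ with $\nu'\in\mathcal{F}_k(x)(\nu,\nu_<)$; internal $S.\nu\mapsto S.\nu'$ with $\nu'\in\mathcal{F}_k(x)(\nu)$. $\mathcal{S}$ on stacks over $V$, for $x\in\widetilde{\Sigma}_k$: call $S.\nu\mapsto S.\nu.\nu'$ with $\nu'|_k\in\mathcal{F}_k(x)(\nu|_k)$, $\nu'|_j=\nu|_j$ for $j\ne k$; return $S.\nu_<.\nu\mapsto S.\nu'$ with $\nu'|_k\in\mathcal{F}_k(x)(\nu|_k,\nu_<|_k)$, $\nu'|_j=\nu|_j$ for $j\ne k$; internal $S.\nu\mapsto S.\nu'$ with $\nu'|_k\in\mathcal{F}_k(x)(\nu|_k)$, $\nu'|_j=\nu|_j$ for $j\ne k$. Both are extended to words by relational composition. *)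

From mathcomp Require Import all_boot.
Unset Printing Implicit Defensive.

Inductive vkind := VCall | VRet | VInt.

(* Nonempty stacks of frames in X: (top frame, rest of the stack listed from
   the frame just below the top downwards).  The stack S.nu is (nu, S). *)
Definition stack (X : Type) := (X * seq X)%type.
Definition top {X : Type} (s : stack X) : X := s.1.

Section VP.
Variables (n : nat) (Sig : finType) (prog : Sig -> 'I_n) (kind : Sig -> vkind)
  (V : 'I_n -> Type).
(* F1 x nu nu'       : nu' \in F_k(x)(nu)          for calls and internals x
   F2 x nu nu_lt nu' : nu' \in F_k(x)(nu, nu_lt)   for returns x              *)
Variables (F1 : forall x : Sig, V (prog x) -> V (prog x) -> Prop)
          (F2 : forall x : Sig, V (prog x) -> V (prog x) -> V (prog x) -> Prop).

Definition Val := forall j : 'I_n, V j.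
Definition stacks := forall j : 'I_n, stack (V j).
Definition tops (S : stacks) : Val := fun j => top (S j).

Definition local_step (x : Sig) (s t : stack (V (prog x))) : Prop :=
  match kind x with
  | VCall => exists nu', F1 x s.1 nu' /\ t = (nu', s.1 :: s.2)
  | VInt  => exists nu', F1 x s.1 nu' /\ t = (nu', s.2)
  | VRet  => match s.2 with
             | nu_lt :: rest => exists nu', F2 x s.1 nu_lt nu' /\ t = (nu', rest)
             | [::] => False
             end
  end.

Definition M_step (x : Sig) (S T : stacks) : Prop :=
  (forall j, j <> prog x -> T j = S j) /\ local_step x (S (prog x)) (T (prog x)).

Definition S_step (x : Sig) (s t : stack Val) : Prop :=
  match kind x with
  | VCall => exists nu' : Val, F1 x (s.1 (prog x)) (nu' (prog x)) /\
             (forall j, j <> prog x -> nu' j = s.1 j) /\ t = (nu', s.1 :: s.2)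
  | VInt  => exists nu' : Val, F1 x (s.1 (prog x)) (nu' (prog x)) /\
             (forall j, j <> prog x -> nu' j = s.1 j) /\ t = (nu', s.2)
  | VRet  => match s.2 with
             | nu_lt :: rest => exists nu' : Val,
                 F2 x (s.1 (prog x)) (nu_lt (prog x)) (nu' (prog x)) /\
                 (forall j, j <> prog x -> nu' j = s.1 j) /\ t = (nu', rest)
             | [::] => False
             end
  end.

Fixpoint word_rel {A : Type} (step : Sig -> A -> A -> Prop) (w : seq Sig)
  (a b : A) : Prop :=
  match w with
  | [::] => a = b
  | x :: w' => exists c, step x a c /\ word_rel step w' c b
  end.

Definition M_sem := word_rel M_step.
Definition S_sem := word_rel S_step.

(* Matching of calls and returns like parentheses: st is the list of programs
   of currently open (unmatched so far) calls, innermost first.  A return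
   with no open call is pending (unmatched).  Well-nested: every matched
   call/return pair belongs to the same program. *)
Fixpoint well_nested_from (st : seq 'I_n) (w : seq Sig) : bool :=
  match w with
  | [::] => true
  | x :: w' =>
    match kind x with
    | VCall => well_nested_from (prog x :: st) w'
    | VInt => well_nested_from st w'
    | VRet => match st with
              | [::] => well_nested_from [::] w'
              | k :: st' => (k == prog x) && well_nested_from st' w'
              end
    end
  end.
Definition well_nested (w : seq Sig) := well_nested_from [::] w.

Fixpoint no_pending_from (d : nat) (w : seq Sig) : bool :=
  match w with
  | [::] => true
  | x :: w' =>
    match kind x with
    | VCall => no_pending_from d.+1 w'
    | VInt => no_pending_from d w'
    | VRet => if d is d'.+1 then no_pending_from d' w' else false
    end
  end.
Definition no_pending_returns (w : seq Sig) := no_pending_from 0 w.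
End VP.

From mathcomp Require Import all_boot.

(* Run both semantics in lockstep, keeping the list st of the programs of
   the currently open calls.  The tops always agree, and the saved frames of
   the single stack correspond one-to-one to the frames pushed onto the
   individual stacks by the open calls: a call of program k saves the global
   valuation f on the single stack and its component f k on stack k.
   Well-nestedness makes every return of program k pop a frame pushed by a
   call of k, so on both sides it sees the same frame below the top, and the
   two step relations coincide. *)

Lemma word_rel_simulation {Sig : finType} {C A B : Type}
    {ok : C -> seq Sig -> Prop} {enabled : C -> Sig -> Prop} {next : C -> Sig -> C}
    {stepA : Sig -> A -> A -> Prop} {stepB : Sig -> B -> B -> Prop}
    {R : C -> A -> B -> Prop}
    (ok_cons : forall c x w, ok c (x :: w) -> enabled c x /\ ok (next c x) w)
    (sim_step : forall c x a b a1, enabled c x -> R c a b -> stepA x a a1 ->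
       exists2 b1, stepB x b b1 & R (next c x) a1 b1)
    {w c a b a'} :
  ok c w -> R c a b -> word_rel Sig stepA w a a' ->
  exists2 b', word_rel Sig stepB w b b' & exists c', R c' a' b'.
Proof.
elim: w c a b a' => [|x w IHw] c a b a' ok_w Rab /=.
  by move=> <-; exists b => //; exists c.
case=> a1 [stepA_a1 rel_a1]; have [en ok_w'] := ok_cons _ _ _ ok_w.
have [b1 stepB_b1 Rab1] := sim_step _ _ _ _ _ en Rab stepA_a1.
by have [b' ? ?] := IHw _ _ _ _ ok_w' Rab1 rel_a1; exists b' => //; exists b1.
Qed.

Lemma dfwith_id (I : eqType) (T : I -> Type) (f : forall i, T i) i j :
  dfwith f (f i) j = f j.
Proof. by case: (eqVneq i j) => [<-|?]; rewrite ?dfwith_in ?dfwith_out. Qed.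

Section Simulation.
Variables (n : nat) (Sig : finType) (prog : Sig -> 'I_n) (kind : Sig -> vkind)
  (V : 'I_n -> Type).
Variables (F1 : forall x : Sig, V (prog x) -> V (prog x) -> Prop)
          (F2 : forall x : Sig, V (prog x) -> V (prog x) -> V (prog x) -> Prop).

Local Notation Val := (Val n V).
Local Notation stacks := (stacks n V).
Local Notation tops := (tops n V).
Local Notation M_step := (M_step n Sig prog kind V F1 F2).
Local Notation S_step := (S_step n Sig prog kind V F1 F2).
Local Notation local_step := (local_step n Sig prog kind V F1 F2).

Definition rests (X : stacks) : forall j, seq (V j) := fun j => (X j).2.

Definition rest_after {A : Type} (kd : vkind) (a : A) (r : seq A) : seq A :=
  match kd with VCall => a :: r | VInt => r | VRet => behead r end.

Definition top_step x (a : V (prog x)) (r : seq (V (prog x))) (a' : V (prog x)) :=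
  match kind x with
  | VRet => if r is b :: _ then F2 x a b a' else False
  | _ => F1 x a a'
  end.

Lemma local_stepE x s t :
  local_step x s t <-> top_step x s.1 s.2 t.1 /\ t.2 = rest_after (kind x) s.1 s.2.
Proof.
case: s t => a r [a' r']; rewrite /local_step /top_step /rest_after /=.
case: (kind x); [|case: r => [|b r] /=; first by split=> [|[]]|].
all: by split=> [[nu [? [-> ->]]] | [? ->]] //; exists a'.
Qed.

Lemma S_stepE x (s t : stack Val) :
  S_step x s t <->
  [/\ top_step x (s.1 (prog x)) [seq f (prog x) | f <- s.2] (t.1 (prog x)),
      forall j, j <> prog x -> t.1 j = s.1 j
    & t.2 = rest_after (kind x) s.1 s.2].
Proof.
case: s t => y r [y' r']; rewrite /S_step /top_step /rest_after /=.
case: (kind x); [|case: r => [|f r] /=; first by split=> [|[]]|].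
all: by split=> [[nu [? [? [-> ->]]]] | [? ? ->]] //; exists y'.
Qed.

(* st lists the programs of the open calls, innermost first; Xr and Ys are
   the frames below the tops of the individual stacks and of the single
   stack. *)
Fixpoint saved_match (st : seq 'I_n) (Xr : forall j, seq (V j)) (Ys : seq Val) :=
  match st, Ys with
  | [::], _ => True
  | k :: st', f :: Ys' =>
      exists2 Xr', saved_match st' Xr' Ys' & forall j, Xr j = dfwith Xr' (f k :: Xr' k) j
  | _ :: _, [::] => False
  end.

Lemma eq_saved_match st Xr Xr' Ys :
  (forall j, Xr' j = Xr j) -> saved_match st Xr Ys -> saved_match st Xr' Ys.
Proof.
case: st Ys => [|k st] [|f Ys] //= eqXr [Xr0 match0 eqXr0].
by exists Xr0 => // j; rewrite eqXr.
Qed.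

Definition return_matches (st : seq 'I_n) x :=
  kind x = VRet -> exists st', st = prog x :: st'.

Lemma saved_match_top_step {st x Xr Ys} a a' :
  return_matches st x -> saved_match st Xr Ys ->
  top_step x a (Xr (prog x)) a' <-> top_step x a [seq f (prog x) | f <- Ys] a'.
Proof.
rewrite /return_matches /top_step; case: (kind x) => // /(_ erefl) [st' ->].
by case: Ys => [|f Ys] //= [Xr' _ ->]; rewrite dfwith_in.
Qed.

Lemma saved_match_step st x Xr Ys (y : Val) Xr1 :
  return_matches st x -> saved_match st Xr Ys ->
  (forall j, Xr1 j = dfwith Xr (rest_after (kind x) (y (prog x)) (Xr (prog x))) j) ->
  saved_match (rest_after (kind x) (prog x) st) Xr1 (rest_after (kind x) y Ys).
Proof.
rewrite /return_matches /rest_after.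
case: (kind x) => [_ match_st eqXr1 | | _ match_st eqXr1].
- by exists Xr.
- move=> /(_ erefl) [st' ->]; case: Ys => [|f Ys] //= [Xr' match_st' eqXr].
  move=> eqXr1; apply: eq_saved_match match_st' => j.
  rewrite eqXr1 eqXr dfwith_in /=.
  case: (eqVneq (prog x) j) => [<-|ne]; first by rewrite dfwith_in.
  by rewrite !dfwith_out // eqXr dfwith_out.
- by apply: eq_saved_match match_st => j; rewrite eqXr1 dfwith_id.
Qed.

Definition sim st (X : stacks) (Y : stack Val) :=
  tops X = top Y /\ saved_match st (rests X) Y.2.

Lemma sim_M_step st x X Y X1 :
  return_matches st x -> sim st X Y -> M_step x X X1 ->
  exists2 Y1, S_step x Y Y1 & sim (rest_after (kind x) (prog x) st) X1 Y1.
Proof.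
move=> ret [eq_tops match_st] [X1_out /local_stepE [top_X1 rest_X1]].
have eqY : Y.1 = tops X by rewrite eq_tops.
exists (tops X1, rest_after (kind x) Y.1 Y.2).
  apply/S_stepE; split=> //=.
    by rewrite eqY; apply/(saved_match_top_step _ _ ret match_st).
  by move=> j /X1_out; rewrite eqY /tops => ->.
split=> //; apply: saved_match_step ret match_st _ => j.
case: (eqVneq (prog x) j) => [<-|ne]; first by rewrite dfwith_in eqY.
by rewrite dfwith_out // /rests X1_out //; apply/eqP; rewrite eq_sym.
Qed.

Lemma sim_S_step st x Y X Y1 :
  return_matches st x -> sim st X Y -> S_step x Y Y1 ->
  exists2 X1, M_step x X X1 & sim (rest_after (kind x) (prog x) st) X1 Y1.
Proof.
move=> ret [eq_tops match_st] /S_stepE [top_Y1 Y1_out rest_Y1].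
have eqY : Y.1 = tops X by rewrite eq_tops.
pose Xr1 := dfwith (rests X) (rest_after (kind x) (Y.1 (prog x)) (rests X (prog x))).
exists (fun j => (Y1.1 j, Xr1 j)); last first.
  by split=> //; rewrite rest_Y1; apply: saved_match_step ret match_st _.
split=> [j ne|].
  rewrite Y1_out // eqY /Xr1 dfwith_out; first exact: esym (surjective_pairing (X j)).
  by apply/eqP; apply: nesym.
apply/local_stepE; rewrite /= /Xr1 dfwith_in eqY; split=> //.
by move: top_Y1; rewrite eqY => /(saved_match_top_step _ _ ret match_st).
Qed.

Definition well_matched_from st (w : seq Sig) :=
  well_nested_from n Sig prog kind st w && no_pending_from Sig kind (size st) w.

Lemma well_matched_from_cons st x w :
  well_matched_from st (x :: w) ->
  return_matches st x /\ well_matched_from (rest_after (kind x) (prog x) st) w.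
Proof.
rewrite /well_matched_from /return_matches /rest_after /=.
case: (kind x) => [ok_w | | ok_w]; [by [] | | by []].
case: st => [|k st] /=; first by rewrite andbF.
move=> /andP [/andP [/eqP <- wn_w] np_w].
by split; [exists st | apply/andP].
Qed.

End Simulation.

Theorem lemmaC2 (n : nat) (Sig : finType) (prog : Sig -> 'I_n)
  (kind : Sig -> vkind) (V : 'I_n -> Type)
  (F1 : forall x : Sig, V (prog x) -> V (prog x) -> Prop)
  (F2 : forall x : Sig, V (prog x) -> V (prog x) -> V (prog x) -> Prop)
  (rho : seq Sig) (Svec : stacks n V) (S : stack (Val n V)) :
  well_nested n Sig prog kind rho ->
  no_pending_returns Sig kind rho ->
  tops n V Svec = top S ->
  forall nu : Val n V,
    (exists Tvec : stacks n V,
        M_sem n Sig prog kind V F1 F2 rho Svec Tvec /\ tops n V Tvec = nu) <->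
    (exists T : stack (Val n V),
        S_sem n Sig prog kind V F1 F2 rho S T /\ top T = nu).
Proof.
move=> wn np eq_tops nu.
have ok_rho : well_matched_from n Sig prog kind [::] rho by apply/andP.
have sim0 : sim n V [::] Svec S by [].
pose ok st w := well_matched_from n Sig prog kind st w.
have ok_cons := @well_matched_from_cons n Sig prog kind.
split=> [[Tvec [M_rho <-]] | [T [S_rho <-]]].
- have [T S_rho [st [eq_tops_T _]]] := word_rel_simulation (ok := ok)
    ok_cons (@sim_M_step n Sig prog kind V F1 F2) ok_rho sim0 M_rho.
  by exists T.
- have [Tvec M_rho [st [eq_tops_T _]]] := word_rel_simulation (ok := ok)
    (R := fun st Y X => sim n V st X Y)
    ok_cons (@sim_S_step n Sig prog kind V F1 F2) ok_rho sim0 S_rho.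
  by exists Tvec.
Qed.
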